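(* Let $A$ be the semi-local highest-score matrix of strings $x$ and $y$, and let $w,r$ be positive integers. A single critical point of the $(w,r)$-restricted highest-score matrix $A^{w,r}$ can be represented using $O(\log(w/r))$ bits, in such a way that all defined entries of $A^{w,r}$ can still be recovered from the stored representation of the critical points.
   Context: Notation: $[i:j] = \{i, \ldots, j\}$ and $\langle i:j\rangle = \{i+\tfrac12, \ldots, j-\tfrac12\}$. The alignment dag of $x = x_1\ldots x_m$ and $y = y_1\ldots y_n$ has vertices $v_{k,l}$, $k\in[0:m]$, $l\in[0:n]$, horizontal and vertical edges of score $0$, and diagonal edges $v_{k-1,l-1}\to v_{k,l}$ of score $1$ present exactly when $x_k=y_l$. The (semi-local) highest-score matrix $A$ has entry $A(i,j)$ equal to the maximum path score from the top boundary at column $i$ to the bottom boundary at column $j$ (the LLCS of $x$ and the corresponding substring of $y$), in Tiskin's semi-local framework. A critical point of $A$ is a pair of odd half-integers $(\hat{\imath},\hat{\jmath})$ with $A(\hat{\imath}+\tfrac12,\hat{\jmath}-\tfrac12)+1 = A(\hat{\imath}-\tfrac12,\hat{\jmath}-\tfrac12) = A(\hat{\imath}+\tfrac12,\hat{\jmath}+\tfrac12) = A(\hat{\imath}-\tfrac12,\hat{\jmath}+\tfrac12)$; its span is $\hat{\jmath}-\hat{\imath}$. Known fact (Tiskin): the critical points form a permutation matrix $D_A$ and $A(i,j) = j-i-\#\{(\hat{\imath},\hat{\jmath}) \text{ critical}: \hat{\imath}>i,\ \hat{\jmath}<j\}$. The $(w,r)$-restricted highest-score matrix is $A^{w,r}(i,j)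 = A(i,j)$ if $j-i\le w$ and $i \bmod r = j \bmod r = 0$, undefined otherwise; its critical points are those of $A$ relevant to these entries (i.e. with span less than $w$). *)

From mathcomp Require Import all_boot all_order all_algebra.
Set Implicit Arguments. Unset Strict Implicit. Unset Printing Implicit Defensive.
Import Order.TTheory GRing.Theory Num.Theory.
Local Open Scope ring_scope.

Section Semilocal.
Variable T : eqType.

(* character of x matches character of the padded string (None = wildcard) *)
Definition cmatch (a : T) (b : option T) : bool :=
  if b is Some b' then a == b' else true.

(* length of a longest common subsequence (= max path score in the alignment dag) *)
Fixpoint llcs (x : seq T) (y : seq (option T)) : nat :=
  match x with
  | [::] => 0%N
  | a :: x' =>
    (fix g (y : seq (option T)) : nat :=
       match y with
       | [::] => 0%N
       | b :: y' => if cmatch a b then (llcs x' y').+1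
                    else maxn (llcs x' (b :: y')) (g y')
       end) y
  end.

(* Tiskin's extended string: y padded by m wildcards on both sides;
   column k of the extended dag, k in [-m : n+m], is offset k+m. *)
Definition padded (m : nat) (y : seq T) : seq (option T) :=
  nseq m None ++ map Some y ++ nseq m None.

Definition psub (m : nat) (y : seq T) (i j : int) : seq (option T) :=
  drop (absz (i + m%:Z)) (take (absz (j + m%:Z)) (padded m y)).

(* semi-local highest-score matrix A(i,j), i,j in [-m : n+m];
   A(i,j) = j - i for i > j (Tiskin's convention). *)
Definition hsm (x y : seq T) (i j : int) : int :=
  if i <= j then (llcs x (psub (size x) y i j))%:Z else j - i.

Definition in_dom (m n : nat) (k : int) : bool :=
  (- m%:Z <= k) && (k <= n%:Z + m%:Z).

(* critical point: the pair of odd half-integers (a + 1/2, b + 1/2) *)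
Definition critical (x y : seq T) (a b : int) : bool :=
  [&& in_dom (size x) (size y) a, in_dom (size x) (size y) (a + 1),
      in_dom (size x) (size y) b, in_dom (size x) (size y) (b + 1),
      hsm x y (a + 1) b + 1 == hsm x y a b,
      hsm x y a b == hsm x y (a + 1) (b + 1) &
      hsm x y (a + 1) (b + 1) == hsm x y a (b + 1)].

Definition critical_wr (w : nat) (x y : seq T) (a b : int) : bool :=
  critical x y a b && (b - a < w%:Z).

Definition defined_wr (w r : nat) (x y : seq T) (i j : int) : bool :=
  [&& in_dom (size x) (size y) i, in_dom (size x) (size y) j,
      j - i <= w%:Z, (i %% r%:Z)%Z == 0 & (j %% r%:Z)%Z == 0].

End Semilocal.

(* By Tiskin's formula, A(i, j) is j - i minus the number of
   critical points in [i, j) x [i, j), and every row of A has at most one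
   critical point.  Both facts come from the Monge property of A (proved by
   induction on x, A for a :: x being the max-plus product of the matrices for
   [a] and x): the 2 x 2 cross differences of A are 0 or 1, equal 1 exactly at
   critical points, telescope to A, and sum to at most 1 along a row.  To
   evaluate a defined entry of A^{w,r} it then suffices to know, for each row a
   of an r-aligned window of width at most w, whether its critical point lies
   in the window; this is determined by the offset between the r-blocks of the
   row and of the column of the critical point, an integer in a range of size
   O(w/r), stored in O(log(w/r)) bits. *)

From mathcomp Require Import all_boot all_order all_algebra zify.
Import Order.TTheory GRing.Theory Num.Theory.
Set Implicit Arguments. Unset Strict Implicit.

Section Alignment.
Variable T : eqType.
Implicit Types (a : T) (b : option T) (x : seq T) (y u : seq (option T)).

Inductive align : seq T -> seq (option T) -> nat -> Prop :=
| align_nil_l y : align [::] y 0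
| align_nil_r x : align x [::] 0
| align_skip_l a x y k : align x y k -> align (a :: x) y k
| align_skip_r x b y k : align x y k -> align x (b :: y) k
| align_match a x b y k : cmatch a b -> align x y k -> align (a :: x) (b :: y) k.+1.

Lemma align0 x y : align x y 0.
Proof. by elim: x => [|a x IH]; [apply: align_nil_l | apply: align_skip_l]. Qed.

Lemma align_nil_lE y k : align [::] y k -> k = 0%N.
Proof. by move E: [::] => x H; elim: H E. Qed.

Lemma align_nil_rE x k : align x [::] k -> k = 0%N.
Proof. by move E: [::] => y H; elim: H E. Qed.

Lemma align_consP a x b y k : align (a :: x) (b :: y) k ->
  [\/ align x (b :: y) k, align (a :: x) y k
    | exists2 k', k = k'.+1 & cmatch a b /\ align x y k'].
Proof.
move E1: (a :: x) => x1; move E2: (b :: y) => y1 H; case: H E1 E2 => //.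
- by move=> ? ? ? ? H [? ?] ?; subst; apply: Or31.
- by move=> ? ? ? ? H ? [? ?]; subst; apply: Or32.
- by move=> ? ? ? ? k' hm H [? ?] [? ?]; subst; apply: Or33; exists k'.
Qed.

Lemma align_behead_r x b y k : align x (b :: y) k ->
  exists2 k', align x y k' & (k <= k'.+1)%N.
Proof.
move E: (b :: y) => y1 H; elim: H b y E => {y1} //.
- by move=> y1 b y _; exists 0%N; [apply: align0|].
- move=> a x1 y1 k1 _ IH b y /IH[k' H1 H2].
  by exists k' => //; apply: align_skip_l.
- by move=> x1 b1 y1 k1 H _ b y [_ ->]; exists k1.
- by move=> a x1 b1 y1 k1 _ H _ b y [_ ->]; exists k1 => //; apply: align_skip_l.
Qed.

Lemma align_behead_l a x y k : align (a :: x) y k ->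
  exists2 k', align x y k' & (k <= k'.+1)%N.
Proof.
move E: (a :: x) => x1 H; elim: H a x E => {x1} //.
- by move=> x1 a x _; exists 0%N; [apply: align0|].
- by move=> a1 x1 y1 k1 H _ a x [_ ->]; exists k1.
- move=> x1 b y1 k1 _ IH a x /IH[k' H1 H2].
  by exists k' => //; apply: align_skip_r.
- by move=> a1 x1 b y1 k1 _ H _ a x [_ ->]; exists k1 => //; apply: align_skip_r.
Qed.

Lemma llcs_cons a x b y : llcs (a :: x) (b :: y) =
  if cmatch a b then (llcs x y).+1 else maxn (llcs x (b :: y)) (llcs (a :: x) y).
Proof. by []. Qed.

Lemma align_llcs x y : align x y (llcs x y).
Proof.
elim: x y => [|a x IHx] y; first exact: align_nil_l.
elim: y => [|b y IHy]; first exact: align_nil_r.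
rewrite llcs_cons; case: ifP => hm; first exact: align_match.
by case: leqP => _; [apply: align_skip_r | apply: align_skip_l].
Qed.

Lemma llcs_max x y k : align x y k -> (k <= llcs x y)%N.
Proof.
elim: x y k => [|a x IHx] y k; first by move/align_nil_lE->.
elim: y k => [|b y IHy] k H; first by rewrite (align_nil_rE H).
rewrite llcs_cons; case: ifP => hm; case: (align_consP H) => [H1|H1|[k' -> [hm' H1]]].
- by case: (align_behead_r H1) => k' /IHx; lia.
- by case: (align_behead_l H1) => k' /IHx; lia.
- by rewrite ltnS; apply: IHx.
- by have := IHx _ _ H1; lia.
- by have := IHy _ H1; lia.
- by rewrite hm' in hm.
Qed.

Lemma align_size x y k : align x y k -> (k <= size x)%N /\ (k <= size y)%N.
Proof. by elim=> //= *; lia. Qed.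

Lemma align_catl x y u k : align x y k -> align x (u ++ y) k.
Proof. by elim: u => [|b u IH] //= H; apply/align_skip_r/IH. Qed.

Lemma align_catr x y u k : align x y k -> align x (y ++ u) k.
Proof.
elim=> /= [y1|x1|a x1 y1 k1 _ IH|x1 b y1 k1 _ IH|a x1 b y1 k1 hm _ IH].
- exact: align_nil_l.
- exact: align0.
- exact: align_skip_l.
- exact: align_skip_r.
- exact: align_match.
Qed.

Lemma align_cat x1 y1 k1 x2 y2 k2 :
  align x1 y1 k1 -> align x2 y2 k2 -> align (x1 ++ x2) (y1 ++ y2) (k1 + k2).
Proof.
elim=> [y|x|a x y k _ IH|x b y k _ IH|a x b y k hm _ IH] H2 /=.
- exact: align_catl.
- by elim: x => [|a x IH] //=; apply: align_skip_l.
- exact/align_skip_l/IH.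
- exact/align_skip_r/IH.
- exact/align_match/IH.
Qed.

Lemma align_drop_prefix x y u k : align x (u ++ y) k ->
  exists2 k', align x y k' & (k <= k' + size u)%N.
Proof.
elim: u k => [|b u IH] k /= H; first by exists k; rewrite ?addn0.
case: (align_behead_r H) => k1 /IH[k' H1 H2] H3.
by exists k' => //; lia.
Qed.

Lemma align_drop_suffix x y u k : align x (y ++ u) k ->
  exists2 k', align x y k' & (k <= k' + size u)%N.
Proof.
move E: (y ++ u) => yu H; elim: H y E => {yu}.
- by move=> y0 y _; exists 0%N; [apply: align_nil_l|].
- by move=> x0 y _; exists 0%N; [apply: align0|].
- move=> a x0 y0 k0 _ IH y /IH[k' H1 H2].
  by exists k' => //; apply: align_skip_l.
- move=> x0 b y0 k0 H IH [|c y] /= E.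
  + exists 0%N; first exact: align0.
    by rewrite E; have [_] := align_size (align_skip_r b H); rewrite /=; lia.
  + case: E => _ /IH[k' H1 H2].
    by exists k' => //; apply: align_skip_r.
- move=> a x0 b y0 k0 hm H IH [|c y] /= E.
  + exists 0%N; first exact: align0.
    by rewrite E; have [_] := align_size (align_match hm H); rewrite /=; lia.
  + case: E => -> /IH[k' H1 H2].
    by exists k'.+1; [apply: align_match | lia].
Qed.

Lemma align_split a x y k : align (a :: x) y k ->
  exists y1 y2 k1 k2,
    [/\ y = y1 ++ y2, align [:: a] y1 k1, align x y2 k2 & (k <= k1 + k2)%N].
Proof.
move E: (a :: x) => x1 H; elim: H a x E => {x1} //.
- by move=> x1 a x _; exists [::], [::], 0%N, 0%N; split=> //; apply: align0.
- by move=> a1 x1 y1 k1 H _ a x [_ ->]; exists [::], y1, 0%N, k1; split=> //; apply: align0.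
- move=> x1 b y1 k1 _ IH a x /IH[y2 [y3 [k2 [k3 [-> H2 H3 H4]]]]].
  by exists (b :: y2), y3, k2, k3; split=> //; apply: align_skip_r.
- move=> a1 x1 b y1 k1 hm H _ a x [-> ->].
  by exists [:: b], y1, 1%N, k1; split=> //; apply: align_match => //; apply: align0.
Qed.

Lemma llcs_nil_r x : llcs x [::] = 0%N.
Proof. by case: x. Qed.

Lemma llcs_single a y : llcs [:: a] y = has (cmatch a) y.
Proof.
by elim: y => [|b y IH] //; rewrite llcs_cons IH /=; case: cmatch; rewrite ?max0n.
Qed.

Lemma llcs_size x y : (llcs x y <= size x)%N /\ (llcs x y <= size y)%N.
Proof. exact: align_size (align_llcs x y). Qed.

Lemma llcs_cons_l a x y : (llcs x y <= llcs (a :: x) y)%N.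
Proof. exact/llcs_max/align_skip_l/align_llcs. Qed.

Lemma llcs_catl x y u : (llcs x y <= llcs x (u ++ y) <= llcs x y + size u)%N.
Proof.
rewrite (llcs_max (align_catl u (align_llcs x y))) /=.
by case: (align_drop_prefix (align_llcs x (u ++ y))) => k /llcs_max; lia.
Qed.

Lemma llcs_catr x y u : (llcs x y <= llcs x (y ++ u) <= llcs x y + size u)%N.
Proof.
rewrite (llcs_max (align_catr u (align_llcs x y))) /=.
by case: (align_drop_suffix (align_llcs x (y ++ u))) => k /llcs_max; lia.
Qed.

Lemma llcs_cat x1 y1 x2 y2 :
  (llcs x1 y1 + llcs x2 y2 <= llcs (x1 ++ x2) (y1 ++ y2))%N.
Proof. exact/llcs_max/align_cat/align_llcs/align_llcs. Qed.

Lemma llcs_cons_split a x y : exists y1 y2,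
  y = y1 ++ y2 /\ llcs (a :: x) y = (llcs [:: a] y1 + llcs x y2)%N.
Proof.
case: (align_split (align_llcs (a :: x) y)) => y1 [y2 [k1 [k2 [E H1 H2 H3]]]].
exists y1, y2; split=> //; apply/eqP; rewrite eqn_leq.
have := llcs_max H1; have := llcs_max H2; have := llcs_cat [:: a] y1 x y2.
by rewrite cat1s -E; lia.
Qed.

End Alignment.

Local Open Scope ring_scope.

Section Window.
Variables (T : eqType) (z : seq (option T)).
Local Notation N := (size z).
Implicit Types (x : seq T) (p q t : nat).

Definition window p q := drop p (take q z).

Definition score x p q : int :=
  if (p <= q)%N then (llcs x (window p q))%:Z else q%:Z - p%:Z.

Lemma size_window p q : (q <= N)%N -> size (window p q) = (q - p)%N.
Proof. by move=> hq; rewrite /window size_drop size_takel. Qed.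

Lemma window_nn p : window p p = [::].
Proof. by apply/eqP; rewrite -size_eq0 size_drop size_take; case: ifP; lia. Qed.

Lemma window_cat p t q : (p <= t)%N -> (t <= q)%N -> (q <= N)%N ->
  window p q = window p t ++ window t q.
Proof.
move=> hpt htq hq; have htN : (t <= N)%N by apply: leq_trans hq.
rewrite /window -{1}(cat_take_drop t (take q z)) take_takel // drop_cat size_takel //.
case: ltnP => // htp; have -> : p = t by apply/eqP; rewrite eqn_leq hpt.
by rewrite subnn drop0 (@drop_oversize _ t (take t z)) ?size_takel.
Qed.

Lemma scoreE x p q : (p <= q)%N -> score x p q = (llcs x (window p q))%:Z.
Proof. by rewrite /score => ->. Qed.

Lemma score_gt x p q : (q < p)%N -> score x p q = q%:Z - p%:Z.
Proof. by move=> hqp; rewrite /score leqNgt hqp. Qed.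

Lemma score_nn x p : score x p p = 0.
Proof. by rewrite scoreE // window_nn llcs_nil_r. Qed.

Lemma score_le x p q : (q <= N)%N -> score x p q <= q%:Z - p%:Z.
Proof.
rewrite /score => hq; case: ifP => // hpq.
by have [_] := llcs_size x (window p q); rewrite size_window //; lia.
Qed.

Lemma score_stepr x p q : (q < N)%N -> 0 <= score x p q.+1 - score x p q <= 1.
Proof.
move=> hq; case: (ltngtP p q.+1) => [hp|hp|->]; last first.
- by rewrite score_nn score_gt //; lia.
- by rewrite !score_gt //; lia.
rewrite !scoreE ?(@window_cat p q q.+1) //; try lia.
by have := llcs_catr x (window p q) (window q q.+1); rewrite size_window // subSnn; lia.
Qed.

Lemma score_stepl x p q : (q <= N)%N -> 0 <= score x p q - score x p.+1 q <= 1.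
Proof.
move=> hq; case: (ltngtP p q) => [hp|hp|->]; last first.
- by rewrite score_nn score_gt //; lia.
- by rewrite !score_gt //; lia.
rewrite !scoreE ?(@window_cat p p.+1 q) //; try lia.
by have := llcs_catl x (window p.+1 q) (window p p.+1); rewrite size_window ?subSnn; lia.
Qed.

End Window.

Definition monge (N : nat) (f : nat -> nat -> int) := forall i i' j j',
  (i <= i')%N -> (i' <= N)%N -> (j <= j')%N -> (j' <= N)%N ->
  f i' j + f i j' <= f i j + f i' j'.

Lemma monge_local N f :
  (forall i j, (i < N)%N -> (j < N)%N -> f i.+1 j + f i j.+1 <= f i j + f i.+1 j.+1) ->
  monge N f.
Proof.
move=> H.
have Hrow i j d : (i < N)%N -> (j + d <= N)%N ->
    f i.+1 j + f i (j + d)%N <= f i j + f i.+1 (j + d)%N.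
  move=> hi; elim: d => [|d IH] hd; first by rewrite addn0; lia.
  by have := IH ltac:(lia); have := H i (j + d)%N hi ltac:(lia); rewrite addnS; lia.
have Hrect i e j j' : (i + e <= N)%N -> (j <= j')%N -> (j' <= N)%N ->
    f (i + e)%N j + f i j' <= f i j + f (i + e)%N j'.
  move=> + hj hj'; elim: e => [|e IH] he; first by rewrite addn0; lia.
  have := IH ltac:(lia); have := Hrow (i + e)%N j (j' - j)%N ltac:(lia) ltac:(lia).
  by rewrite subnKC // addnS; lia.
by move=> i i' j j' hi hi' hj hj'; have := Hrect i (i' - i)%N j j'; rewrite subnKC //; apply.
Qed.

(* The max-plus product of Monge matrices is Monge: exchange the two optimal
   middle indices, which can be done on the side where they are ordered. *)
Lemma monge_maxplus N (A B C : nat -> nat -> int) :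
  monge N A -> monge N B ->
  (forall i j t, (i <= N)%N -> (j <= N)%N -> (t <= N)%N -> A i t + B t j <= C i j) ->
  (forall i j, (i <= N)%N -> (j <= N)%N -> exists2 t, (t <= N)%N & C i j = A i t + B t j) ->
  monge N C.
Proof.
move=> MA MB Cge Cex i i' j j' hi hi' hj hj'.
have [t1 ht1 ->] := Cex i' j ltac:(lia) ltac:(lia).
have [t2 ht2 ->] := Cex i j' ltac:(lia) ltac:(lia).
have := Cge i j t1 ltac:(lia) ltac:(lia) ht1; have := Cge i' j' t2 hi' hj' ht2.
have := Cge i j t2 ltac:(lia) ltac:(lia) ht2; have := Cge i' j' t1 hi' hj' ht1.
case: (leqP t1 t2) => ht.
- by have := MA i i' t1 t2 hi hi' ht ht2; lia.
- by have := MB t2 t1 j j' (ltnW ht) ht1 hj hj'; lia.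
Qed.

Section MongeScore.
Variables (T : eqType) (z : seq (option T)).
Local Notation N := (size z).
Local Notation window := (window z).
Local Notation score := (score z).

Lemma monge_score_nil : monge N (score [::]).
Proof.
have llcs0 y : llcs [::] y = 0%N by [].
by move=> i i' j j' *; rewrite /score !llcs0; do 4!case: leqP => ?; lia.
Qed.

Lemma monge_score_single a : monge N (score [:: a]).
Proof.
apply: monge_local => i j hi hj; case: (ltngtP i j) => [hij|hij|<-].
- rewrite !scoreE; try lia.
  rewrite (@window_cat _ z i i.+1 j.+1) ?(@window_cat _ z i.+1 j j.+1)
          ?(@window_cat _ z i i.+1 j); try lia.
  by rewrite !llcs_single !has_cat; do 3!case: has.
- rewrite !(score_gt _ _ hij) ?(score_gt _ _ (_ : j.+1 < i.+1)%N) //.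
  case: (ltngtP i j.+1) => [|h2|<-]; [lia | | ].
  + by rewrite (score_gt _ _ h2) (score_gt _ _ (_ : j < i.+1)%N) //; lia.
  + by rewrite score_nn (score_gt _ _ (_ : j < i.+1)%N) //; lia.
- rewrite !score_nn (score_gt _ _ (ltnSn i)) scoreE // llcs_single.
  by case: has => /=; lia.
Qed.

(* [score (a :: x)] is the max-plus product of [score [:: a]] and [score x]. *)
Lemma monge_score_cons a x : monge N (score x) -> monge N (score (a :: x)).
Proof.
move=> Mx; apply: (monge_maxplus (monge_score_single a) Mx).
- move=> i j t hi hj ht; case: (leqP i j) => hij; last first.
    by rewrite (score_gt _ _ hij); have := score_le [:: a] i ht; have := score_le x t hj; lia.
  rewrite (scoreE _ (a :: x) hij).
  case: (leqP i t) => hit; case: (leqP t j) => htj; try lia.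
  + rewrite !scoreE // (window_cat hit htj hj).
    by have := llcs_cat [:: a] (window i t) x (window t j); rewrite cat1s; lia.
  + rewrite scoreE // (score_gt _ _ htj) (window_cat hij (ltnW htj) ht).
    have := llcs_catr [:: a] (window i j) (window j t); rewrite size_window //.
    by have := llcs_cat [:: a] (window i j) x [::]; rewrite cat1s cats0 llcs_nil_r; lia.
  + rewrite (score_gt _ _ hit) scoreE; last lia.
    rewrite (window_cat (ltnW hit) hij hj).
    have := llcs_catl x (window i j) (window t i); rewrite size_window; last lia.
    by have := llcs_cons_l a x (window i j); lia.
- move=> i j hi hj; case: (leqP i j) => hij; last first.
    by exists i => //; rewrite score_nn !(score_gt _ _ hij); lia.
  rewrite (scoreE _ _ hij); have [y1 [y2 [E ->]]] := llcs_cons_split a x (window i j).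
  have hs : (size y1 + size y2 = j - i)%N by rewrite -size_cat -E size_window.
  exists (i + size y1)%N; first lia.
  have Ewin : window i j = window i (i + size y1) ++ window (i + size y1) j.
    by apply: window_cat; lia.
  have hs1 : size (window i (i + size y1)) = size y1 by rewrite size_window; lia.
  move: E; rewrite Ewin => /eqP; rewrite eqseq_cat // => /andP[/eqP E1 /eqP E2].
  by rewrite !scoreE ?E1 ?E2 ?PoszD //; lia.
Qed.

Lemma monge_score x : monge N (score x).
Proof. by elim: x => [|a x IH]; [apply: monge_score_nil | apply: monge_score_cons]. Qed.

End MongeScore.

Section Density.
Variables (T : eqType) (z : seq (option T)) (x : seq T).
Local Notation N := (size z).
Local Notation score := (score z x).

Definition density a b := score a b + score a.+1 b.+1 - score a.+1 b - score a b.+1.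

Definition crit a b := [&& score a.+1 b + 1 == score a b, score a b == score a.+1 b.+1
                         & score a.+1 b.+1 == score a b.+1].

Lemma density_ge0 a b : (a < N)%N -> (b < N)%N -> 0 <= density a b.
Proof.
move=> ha hb; have := @monge_score _ z x a a.+1 b b.+1 (leqnSn a) ha (leqnSn b) hb.
by rewrite /density; lia.
Qed.

(* Unit steps leave [0] and [1] as the only possible densities, and [1] forces
   the pattern of a critical point. *)
Lemma densityE a b : (a < N)%N -> (b < N)%N -> density a b = (crit a b)%:Z.
Proof.
move=> ha hb; have := density_ge0 ha hb.
have := score_stepl x a (ltnW hb); have := score_stepl x a hb.
have := score_stepr x a hb; have := score_stepr x a.+1 hb.
rewrite /density /crit; case: and3P => [[/eqP e1 /eqP e2 /eqP e3]|hn] /=; first lia.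
move=> *; apply/eqP; rewrite eq_le; apply/andP; split; last by [].
by rewrite leNgt; apply/negP => hpos; apply: hn; split; apply/eqP; lia.
Qed.

Lemma sum_density p q p' q' : (p <= q)%N -> (p' <= q')%N ->
  \sum_(p <= a < q) \sum_(p' <= b < q') density a b =
  score p p' + score q q' - score q p' - score p q'.
Proof.
move=> hpq hpq'.
rewrite (@telescope_sumr_eq _ p q (fun a => score a q' - score a p')) //; first lia.
move=> a _; rewrite (@telescope_sumr_eq _ p' q' (fun b => score a.+1 b - score a b)) //.
  by rewrite /=; lia.
by move=> b _; rewrite /density; lia.
Qed.

Lemma sum_density_row a : (a < N)%N -> \sum_(0 <= b < N) density a b <= 1.
Proof.
move=> ha; rewrite (@telescope_sumr_eq _ 0 N (fun b => score a.+1 b - score a b)) //.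
  have := score_stepl x a (leqnn N).
  by rewrite (score_gt _ _ (ltn0Sn a)); case: a ha => [|a] ha;
    rewrite ?score_nn ?(score_gt _ _ (ltn0Sn a)); lia.
by move=> b _; rewrite /density; lia.
Qed.

Lemma crit_uniq a b1 b2 : (a < N)%N -> (b1 < N)%N -> (b2 < N)%N ->
  crit a b1 -> crit a b2 -> b1 = b2.
Proof.
move=> ha h1 h2 c1 c2; apply/eqP; apply/negPn/negP => hne.
have := sum_density_row ha.
rewrite big_mkord (bigD1 (Ordinal h1)) //= (bigD1 (Ordinal h2)) /=; last first.
  by rewrite -val_eqE /= eq_sym.
rewrite !densityE // c1 c2 /=; set rest := (X in _ + (_ + X) <= _).
have : 0 <= rest by apply: sumr_ge0 => i _; apply: density_ge0.
by lia.
Qed.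

End Density.

Lemma sum_indicator_nat (p q b0 : nat) :
  \sum_(p <= b < q) ((b == b0 : nat)%:Z) = (((p <= b0) && (b0 < q))%N : nat)%:Z.
Proof.
elim: q => [|q IH]; first by rewrite big_geq // ltn0 andbF.
case: (leqP p q) => hpq; last first.
  by rewrite big_geq //; case: (leqP p b0) => h //=; rewrite ltnS leqNgt (leq_trans hpq h).
rewrite big_nat_recr //= IH; case: (ltngtP b0 q) => h.
- by rewrite ltnS (ltnW h) andbT addr0.
- by rewrite ltnS (leqNgt b0 q) h !andbF.
- by rewrite h andbF ltnSn andbT hpq.
Qed.

Section RowSums.
Variables (T : eqType) (z : seq (option T)) (x : seq T).
Local Notation N := (size z).
Local Notation density := (density z x).
Local Notation crit := (crit z x).
Variables (a p q : nat).
Hypotheses (ha : (a < N)%N) (hq : (q <= N)%N).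

Lemma sum_density_crit b0 : (b0 < N)%N -> crit a b0 ->
  \sum_(p <= b < q) density a b = (((p <= b0) && (b0 < q))%N : nat)%:Z.
Proof.
move=> hb0 c0; rewrite -sum_indicator_nat; apply: eq_big_nat => b /andP[_ hb].
have hbN : (b < N)%N by apply: leq_trans hq.
rewrite densityE //; congr (Posz (nat_of_bool _)).
by apply/idP/eqP => [cb|->//]; apply: crit_uniq cb c0.
Qed.

Lemma sum_density_nocrit : (forall b, (b < N)%N -> ~~ crit a b) ->
  \sum_(p <= b < q) density a b = 0.
Proof.
move=> hno; rewrite big1_seq // => b /andP[_]; rewrite mem_index_iota => /andP[_ hb].
by rewrite densityE ?(negbTE (hno _ _)) //; apply: leq_trans hq.
Qed.

End RowSums.

Section Padded.
Variables (T : eqType) (x y : seq T).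
Local Notation m := (size x).
Local Notation n := (size y).
Local Notation z := (padded m y).
Local Notation N := (size z).

Lemma size_padded : N = (n + m + m)%N.
Proof. by rewrite /padded !size_cat size_map !size_nseq; lia. Qed.

Lemma hsm_score (p q : nat) : hsm x y (p%:Z - m%:Z) (q%:Z - m%:Z) = score z x p q.
Proof.
rewrite /hsm /psub /score /window !subrK lerD2r lez_nat.
by case: ifP => // _; lia.
Qed.

Lemma in_dom_shift (p : nat) : in_dom m n (p%:Z - m%:Z) = (p <= N)%N.
Proof. by rewrite size_padded /in_dom; apply/idP/idP; lia. Qed.

Lemma in_domP k : in_dom m n k -> exists2 p : nat, k = p%:Z - m%:Z & (p <= N)%N.
Proof. by rewrite /in_dom size_padded => /andP[h1 h2]; exists (absz (k + m%:Z)); lia. Qed.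

Lemma critical_shift (a b : nat) : critical x y (a%:Z - m%:Z) (b%:Z - m%:Z) =
  [&& (a < N)%N, (b < N)%N & crit z x a b].
Proof.
have e (k : nat) : k%:Z - m%:Z + 1 = k.+1%:Z - m%:Z by lia.
rewrite /critical !e !in_dom_shift !hsm_score /crit.
case: (leqP a.+1 N) => ha; case: (leqP b.+1 N) => hb; rewrite /= ?andbF //.
by rewrite (ltnW ha) (ltnW hb).
Qed.

End Padded.

Definition stored_in_window (code : int -> int -> seq bool)
    (store : int -> option (seq bool)) (i j a : int) : bool :=
  if store a is Some s then has (fun t : nat => code a (i + t%:Z) == s) (iota 0 `|j - i|)
  else false.

(* [A(i, j)] is [j - i] minus the number of critical points in [[i, j) x [i, j)],
   and each row [a] stores the code of its critical point, if any. *)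
Definition decode code store (i j : int) : int :=
  if i <= j then
    (j - i) - \sum_(0 <= t < `|j - i|) (stored_in_window code store i j (i + t%:Z) : nat)%:Z
  else j - i.

Section Decoder.
Variables (T : eqType) (x y : seq T) (w r : nat).
Variables (code : int -> int -> seq bool) (store : int -> option (seq bool)).
Local Notation m := (size x).
Local Notation z := (padded m y).
Local Notation N := (size z).

Hypothesis code_window : forall i j a b b0 : int,
  (i %% r%:Z)%Z = 0 -> (j %% r%:Z)%Z = 0 -> j - i <= w%:Z ->
  i <= a < j -> i <= b < j -> b0 - a < w%:Z -> code a b = code a b0 -> i <= b0 < j.
Hypothesis store_crit : forall a b, critical_wr w x y a b -> store a = Some (code a b).
Hypothesis store_none : forall a, (forall b, ~~ critical_wr w x y a b) -> store a = None.

Lemma store_shift_none (a : nat) :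
  (forall b : nat, (b < N)%N -> crit z x a b -> w%:Z <= b%:Z - a%:Z) ->
  store (a%:Z - m%:Z) = None.
Proof.
move=> hfar; apply: store_none => b'; apply/negP => /andP[hc hspan].
case/and5P: (hc) => _ _ /in_domP[b eb _] _ _; subst b'.
by move: hc; rewrite critical_shift => /and3P[_ hb /(hfar _ hb)]; lia.
Qed.

Lemma stored_in_window_density (p q a : nat) :
  (p <= a < q)%N -> (q <= N)%N -> (q - p <= w)%N ->
  ((p%:Z - m%:Z) %% r%:Z)%Z = 0 -> ((q%:Z - m%:Z) %% r%:Z)%Z = 0 ->
  (stored_in_window code store (p%:Z - m%:Z) (q%:Z - m%:Z) (a%:Z - m%:Z) : nat)%:Z
  = \sum_(p <= b < q) density z x a b.
Proof.
move=> /andP[hpa haq] hqN hw hp hq; have haN : (a < N)%N by apply: leq_trans hqN.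
rewrite /stored_in_window (_ : `|_ - _| = q - p)%N; last by lia.
have [[b0 hb0 c0]|hno] := altP (@hasP _ (crit z x a) (iota 0 N)); last first.
  have nocrit b : (b < N)%N -> ~~ crit z x a b.
    by move=> hb; apply/negP => cb; case/hasP: hno; exists b; rewrite ?mem_iota.
  by rewrite store_shift_none ?sum_density_nocrit // => b /nocrit/negP.
rewrite mem_iota /= in hb0; rewrite (sum_density_crit _ haN hqN hb0 c0).
have crit0 : critical x y (a%:Z - m%:Z) (b0%:Z - m%:Z) by rewrite critical_shift haN hb0.
have [hspan|hspan] := ltP (b0%:Z - a%:Z) w%:Z; last first.
  rewrite store_shift_none /=; last by move=> b hb cb; rewrite (crit_uniq haN hb hb0 cb c0).
  have hqb0 : (q <= b0)%N by lia.
  by rewrite ltnNge hqb0 andbF.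
rewrite (store_crit (b := b0%:Z - m%:Z)); last by rewrite /critical_wr crit0; lia.
congr (Posz (nat_of_bool _)); apply/hasP/idP => [[t]|hin].
  rewrite mem_iota add0n => ht /eqP /(code_window hp hq); lia.
exists (b0 - p)%N; first by rewrite mem_iota; lia.
by apply/eqP; congr (code _ _); lia.
Qed.

Lemma decode_hsm i j : defined_wr w r x y i j -> decode code store i j = hsm x y i j.
Proof.
case/and5P => /in_domP[p -> hpN] /in_domP[q -> hqN] hw hp hq.
rewrite hsm_score /decode; case: ifP => hij; last by rewrite score_gt; lia.
have hpq : (p <= q)%N by lia.
rewrite (_ : `|_ - _| = q - p)%N; last by lia.
have -> : \sum_(0 <= t < q - p)
    (stored_in_window code store (p%:Z - m%:Z) (q%:Z - m%:Z) (p%:Z - m%:Z + t%:Z) : nat)%:Z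
    = \sum_(0 + p <= a < q) \sum_(p <= b < q) density z x a b.
  rewrite big_addn; apply: eq_big_nat => t /andP[_ ht].
  rewrite -stored_in_window_density; try lia.
  by rewrite (_ : p%:Z - m%:Z + t%:Z = (t + p)%N%:Z - m%:Z) //; lia.
rewrite add0n sum_density // !score_nn.
have [->|hlt] := eqVneq p q; first by rewrite score_nn; lia.
by rewrite score_gt; lia.
Qed.

End Decoder.

Fixpoint bits (l v : nat) : seq bool :=
  if l is l'.+1 then odd v :: bits l' v./2 else [::].

Fixpoint unbits (s : seq bool) : nat :=
  if s is b :: s' then (b + (unbits s').*2)%N else 0%N.

Lemma size_bits l v : size (bits l v) = l.
Proof. by elim: l v => [|l IH] v //=; rewrite IH. Qed.

Lemma bitsK l v : (v < 2 ^ l)%N -> unbits (bits l v) = v.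
Proof.
elim: l v => [|l IH] v /=; first by rewrite expn0; case: v.
by rewrite expnS => hv; rewrite IH ?odd_double_half // -divn2; lia.
Qed.

Lemma bits_inj l v1 v2 : (v1 < 2 ^ l)%N -> (v2 < 2 ^ l)%N ->
  bits l v1 = bits l v2 -> v1 = v2.
Proof. by move=> h1 h2 e; rewrite -(bitsK h1) -(bitsK h2) e. Qed.

Lemma ltn_exp2_trunc_log q : (2 * q + 3 < 2 ^ (trunc_log 2 q).+3)%N.
Proof.
have := @trunc_log_ltn 2 q isT; have : (0 < 2 ^ trunc_log 2 q)%N by rewrite expn_gt0.
by rewrite !expnS; lia.
Qed.

Section BlockCode.
Variables (w r : nat).
Hypothesis r_gt0 : (0 < r)%N.
Local Notation Q := (w %/ r)%N.

Definition block (a : int) : int := (a %/ r%:Z)%Z.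

(* The offset of the [r]-block of [b] from that of [a], shifted by [Q + 2] to
   make it positive whenever it matters, and clamped to [0] otherwise. *)
Definition offset_code (a b : int) : nat :=
  let k := block b - block a + Q.+2%:Z in if k <= 0 then 0%N else absz k.

Let r_gt0_int : 0 < r%:Z. Proof. by rewrite ltz_nat. Qed.

Lemma block_geE (I b : int) : (I <= block b) = (I * r%:Z <= b).
Proof. exact: lez_divRL. Qed.

Lemma block_ltE (b J : int) : (block b < J) = (b < J * r%:Z).
Proof. exact: ltz_divLR. Qed.

Lemma block_mulK (i : int) : (i %% r%:Z)%Z = 0 -> i = block i * r%:Z.
Proof. by move=> hi; rewrite {1}(divz_eq i r%:Z) hi addr0. Qed.

Lemma w_lt_ceil : w%:Z < Q.+1%:Z * r%:Z.
Proof. by rewrite -PoszM ltz_nat ltn_ceil. Qed.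

Lemma offset_code_le (a b : int) : b - a < w%:Z -> (offset_code a b <= 2 * Q + 3)%N.
Proof.
move=> hab; have hB : block b * r%:Z <= b by rewrite -block_geE.
have hA : a < (block a + 1) * r%:Z by rewrite -block_ltE ltrDl.
have : (block b - block a - 1) * r%:Z < Q.+1%:Z * r%:Z by have := w_lt_ceil; lia.
(* [lia] cannot see that [w %/ r] is nonnegative, so it is abstracted. *)
rewrite ltr_pM2r // /offset_code; move: (block b - block a) Q => k q.
by case: ifP; lia.
Qed.

Lemma offset_code_window (i j a b b0 : int) :
  (i %% r%:Z)%Z = 0 -> (j %% r%:Z)%Z = 0 -> j - i <= w%:Z ->
  i <= a < j -> i <= b < j -> offset_code a b = offset_code a b0 -> i <= b0 < j.
Proof.
move=> /block_mulK ei /block_mulK ej hij ha hb.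
have inE (c : int) : (i <= c < j) = (block i <= block c < block j).
  by rewrite block_geE block_ltE -ei -ej.
have hQ : block j - block i < Q.+1%:Z.
  by rewrite -(ltr_pM2r r_gt0_int); have := w_lt_ceil; lia.
move: ha hb; rewrite !inE /offset_code.
move: (block i) (block j) (block a) (block b) (block b0) Q hQ => I J A B B0 q hQ.
by case: ifP => hk1; case: ifP => hk2; lia.
Qed.

End BlockCode.

Theorem proposition2 :
  exists C : nat, forall w r : nat, (0 < w)%N -> (0 < r)%N ->
  exists (code : int -> int -> seq bool)
         (dec : nat -> nat -> (int -> option (seq bool)) -> int -> int -> int),
    (forall a b : int, b - a < w%:Z ->
       (size (code a b) <= C * (trunc_log 2 (w %/ r)).+1)%N) /\
    forall (T : eqType) (x y : seq T) (store : int -> option (seq bool)),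
      (forall a b, critical_wr w x y a b -> store a = Some (code a b)) ->
      (forall a, (forall b, ~~ critical_wr w x y a b) -> store a = None) ->
      forall i j, defined_wr w r x y i j ->
        dec (size x) (size y) store i j = hsm x y i j.
Proof.
exists 3%N => w r _ r_gt0.
pose code a b := bits (trunc_log 2 (w %/ r)).+3 (offset_code w r a b).
have code_lt a b : b - a < w%:Z -> (offset_code w r a b < 2 ^ (trunc_log 2 (w %/ r)).+3)%N.
  by move=> hab; apply: leq_ltn_trans (offset_code_le r_gt0 hab) (ltn_exp2_trunc_log _).
exists code, (fun _ _ => decode code).
split=> [a b _|T x y store store_crit store_none i j hdef].
  by rewrite size_bits; lia.
apply: (decode_hsm _ store_crit store_none hdef) => i' j' a b b0 hi hj hw ha hb hb0 e.
apply: (offset_code_window r_gt0 hi hj hw ha hb).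
by apply: bits_inj e; apply: code_lt => //; lia.
Qed.
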